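(* Let $R$ be a commutative ring with identity that is not an integral domain. If $R$ is not isomorphic to $\mathbb{Z}_2 \times D$ for any integral domain $D$, then $\gamma_t(\Gamma(R)) = \gamma(\Gamma(R))$ (as cardinal numbers).
   Context: All rings are commutative with identity $1$. $Z(R)$ denotes the set of zero-divisors of $R$ and $Z(R)^* = Z(R)\setminus\{0\}$. The zero-divisor graph $\Gamma(R)$ has vertex set $Z(R)^*$; distinct vertices $r,s$ are adjacent iff $rs=0$, and a vertex $x$ is additionally considered adjacent to itself (looped) iff $x^2=0$. A set $X\subseteq Z(R)^*$ is a dominating set if every vertex not in $X$ is adjacent to some element of $X$; it is a total dominating set if every vertex $v$ (including those in $X$) is adjacent to some $x\in X$, where self-adjacency $x=v$ with $x^2=0$ counts. $\gamma(\Gamma(R))$ and $\gamma_t(\Gamma(R))$ are the minimum cardinalities of a dominating set and of a total dominating set, respectively. *)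

From HB Require Import structures.
From mathcomp Require Import all_boot all_order all_algebra.
From mathcomp Require Import boolp classical_sets cardinality.
Set Implicit Arguments. Unset Strict Implicit. Unset Printing Implicit Defensive.
Import GRing.Theory.
Local Open Scope ring_scope.
Local Open Scope classical_set_scope.

(* Z(R)^* : the nonzero zero-divisors of R (vertex set of Gamma(R)). *)
Definition zdiv_star (R : comNzRingType) : set R :=
  [set x | x != 0 /\ exists y : R, y != 0 /\ x * y = 0].
Arguments zdiv_star : clear implicits.

(* Adjacency in Gamma(R): distinct vertices x,y adjacent iff x*y = 0;
   a vertex x is looped iff x^2 = x*x = 0.  Uniformly: x*y = 0. *)
Definition zd_adj (R : comNzRingType) (x y : R) : Prop := x * y = 0.

Definition dominating (R : comNzRingType) (X : set R) : Prop :=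
  X `<=` zdiv_star R /\
  forall v, zdiv_star R v -> ~ X v -> exists2 x, X x & zd_adj x v.

Definition total_dominating (R : comNzRingType) (X : set R) : Prop :=
  X `<=` zdiv_star R /\
  forall v, zdiv_star R v -> exists2 x, X x & zd_adj x v.

Definition min_dominating (R : comNzRingType) (X : set R) : Prop :=
  dominating X /\ forall Z : set R, dominating Z -> (X #<= Z)%card.

Definition min_total_dominating (R : comNzRingType) (X : set R) : Prop :=
  total_dominating X /\ forall Z : set R, total_dominating Z -> (X #<= Z)%card.

Definition gammat_eq_gamma (R : comNzRingType) : Prop :=
  exists X Y : set R, [/\ min_dominating X, min_total_dominating Y & (X #= Y)%card].

Definition ring_iso (R S : comNzRingType) (f : R -> S) : Prop :=
  bijective f /\ [/\ f 1 = 1, {morph f : x y / x + y} & {morph f : x y / x * y}].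

From HB Require Import structures.
From mathcomp Require Import all_boot all_order all_algebra.
From mathcomp Require Import boolp classical_sets cardinality.
From mathcomp Require Import zify.
Set Implicit Arguments. Unset Strict Implicit. Unset Printing Implicit Defensive.
Import GRing.Theory.
Local Open Scope classical_set_scope.

(* Since total dominating sets are dominating, gamma <= gamma_t; conversely,
   every dominating set X yields a total dominating set of at most the same
   cardinality.  If X is infinite, add to each element one annihilating
   partner, which costs nothing as |X * 2| = |X|.  If X is finite, remove
   the isolated vertices of the subgraph induced on X one at a time, each
   time trading an isolated x and another x' in X for a pair of adjacent
   zero-divisors.  When X = {x} with x isolated, either some w <> 0 with
   w x = 0 kills everything x kills, and {w} is total dominating, or x is an
   idempotent with x R = {0, x}, and then R = Z_2 * ann(x) with ann(x) a
   domain.  Both minima exist because cardinals are well ordered (Zorn). *)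

Definition selectors (T : Type) (P : set (set T)) (D : set (set T -> T)) :=
  (forall t, D t -> forall Z, P Z -> Z (t Z)) /\
  (forall Z, P Z -> forall t s, D t -> D s -> t Z = s Z -> t = s).

Lemma exists_maximal_selectors (T : Type) (P : set (set T)) :
  exists D, selectors P D /\ forall B, D `<` B -> ~ selectors P B.
Proof.
apply: Zorn_bigcup => F Fsel Ftot; split.
  by move=> t [D FD Dt]; exact: (Fsel D FD).1.
move=> Z PZ t s [D1 FD1 D1t] [D2 FD2 D2s].
have [D12|D21] := Ftot _ _ FD1 FD2.
- exact: (Fsel D2 FD2).2 Z PZ t s (D12 _ D1t) D2s.
- exact: (Fsel D1 FD1).2 Z PZ t s D1t (D21 _ D2s).
Qed.

Lemma card_min_exists (T : Type) (P : set (set T)) (X0 : set T) :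
  P X0 -> exists2 X, P X & forall Z, P Z -> (X #<= Z)%card.
Proof.
move=> PX0; have [D [[DP Dinj] Dmax]] := exists_maximal_selectors P.
(* A maximal family of selectors exhausts some member of P, since otherwise
   a selector of missing elements could be added to it. *)
have [Z0 PZ0 Z0D] : exists2 Z0, P Z0 & Z0 `<=` (fun t => t Z0) @` D.
  apply: contrapT => noZ0.
  have miss Z : P Z -> exists2 z, Z z & ~ ((fun t => t Z) @` D) z.
    move=> PZ; apply: contrapT => allin; apply: noZ0; exists Z => // z Zz.
    by apply: contrapT => nz; apply: allin; exists z.
  have [z0 _ _] := miss X0 PX0.
  have [t0 t0P] : {t0 : set T -> T &
      forall Z, P Z -> Z (t0 Z) /\ ~ ((fun t => t Z) @` D) (t0 Z)}.
    apply: (@choice _ _ (fun Z z => P Z -> Z z /\ ~ ((fun t => t Z) @` D) z)) => Z.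
    have [PZ|nPZ] := pselect (P Z); last by exists z0.
    by have [z Zz nz] := miss Z PZ; exists z.
  have t0D : ~ D t0 by move=> Dt0; apply: (t0P X0 PX0).2; exists t0.
  apply: (Dmax (D `|` [set t0])).
    by split => [t Dt|/(_ t0 (or_intror erefl))]; [left|].
  split => [t [Dt|->] Z PZ|Z PZ t s [Dt|->] [Ds|->] tsZ //].
  - exact: DP t Dt Z PZ.
  - exact: (t0P Z PZ).1.
  - exact: Dinj tsZ.
  - by case: (t0P Z PZ).2; exists t.
  - by case: (t0P Z PZ).2; exists s.
exists Z0 => // Z PZ.
apply: card_le_trans (subset_card_le Z0D) _.
apply: card_le_trans (card_image_le _ _) _.
have inj : {in D &, injective (fun t => t Z)}.
  by move=> t s; rewrite !in_setE => Dt Ds; exact: Dinj Z PZ t s Dt Ds.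
rewrite -(card_le_eql (inj_card_eq inj)).
by apply: subset_card_le => _ [t Dt <-]; exact: DP t Dt Z PZ.
Qed.

Lemma infinite_set_inj_nat (T : Type) (A : set T) : infinite_set A ->
  exists2 c : nat -> T, (forall n, A (c n)) & injective c.
Proof.
elim/Ppointed: T => T in A *.
  by rewrite (empty_eq0 A) => /(_ (finite_set0 _)).
move=> /infiniteP /pcard_leP /injfunPex [c cA cinj].
by exists c => [n|m n]; [exact: cA|apply: cinj; rewrite in_setE].
Qed.

Section HilbertHotel.
Variables (T : Type) (A B : set T) (c : nat -> T) (k : nat) (idx : T -> nat).
Hypotheses (cA : forall n, A (c n)) (cinj : injective c).
Hypotheses (idxk : forall y, (B `\` A) y -> (idx y < k)%N)
  (idxinj : {in B `\` A &, injective idx}).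

(* The sequence c is shifted by k, which makes room for B `\` A. *)
Definition hotel y := if pselect (exists n, c n = y) is left e
  then c (projT1 (cid e) + k)%N else if pselect (A y) then y else c (idx y).

Let hotel_c n : hotel (c n) = c (n + k)%N.
Proof.
rewrite /hotel; case: pselect => [e|[]]; last by exists n.
by case: cid => m /= /cinj ->.
Qed.
Let hotel_A y : ~ (exists n, c n = y) -> A y -> hotel y = y.
Proof. by move=> nc Ay; rewrite /hotel; case: pselect => // _; case: pselect. Qed.
Let hotel_B y : ~ (exists n, c n = y) -> ~ A y -> hotel y = c (idx y).
Proof. by move=> nc nAy; rewrite /hotel; case: pselect => // _; case: pselect. Qed.
Let idx_lt y : ~ A y -> (A `|` B) y -> (idx y < k)%N.
Proof. by move=> nAy [//|By]; apply: idxk. Qed.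

Lemma hotel_inj : {in A `|` B &, injective hotel}.
Proof.
move=> y1 y2; rewrite !in_setE => y1AB y2AB.
have [[n1 <-]|c1] := pselect (exists n, c n = y1);
have [[n2 <-]|c2] := pselect (exists n, c n = y2).
- by rewrite !hotel_c => /cinj /addIn ->.
- rewrite hotel_c; have [A2|nA2] := pselect (A y2).
    by rewrite hotel_A // => E; case: c2; exists (n1 + k)%N.
  by rewrite hotel_B // => /cinj E; have := idx_lt nA2 y2AB; lia.
- rewrite hotel_c; have [A1|nA1] := pselect (A y1).
    by rewrite hotel_A // => E; case: c1; exists (n2 + k)%N.
  by rewrite hotel_B // => /cinj E; have := idx_lt nA1 y1AB; lia.
- have [A1|nA1] := pselect (A y1); have [A2|nA2] := pselect (A y2).
  + by rewrite !hotel_A.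
  + by rewrite hotel_A // hotel_B // => E; case: c1; exists (idx y2).
  + by rewrite hotel_B // hotel_A // => E; case: c2; exists (idx y1).
  rewrite !hotel_B // => /cinj; apply: idxinj; rewrite in_setE.
    by case: y1AB.
  by case: y2AB.
Qed.

Lemma hotel_sub : hotel @` (A `|` B) `<=` A.
Proof.
move=> _ [y _ <-]; have [[n <-]|nc] := pselect (exists n, c n = y).
  by rewrite hotel_c.
by have [Ay|nAy] := pselect (A y); [rewrite hotel_A|rewrite hotel_B].
Qed.

End HilbertHotel.

Lemma card_le_setU_finite (T : Type) (A B : set T) :
  infinite_set A -> finite_set B -> (A `|` B #<= A)%card.
Proof.
move=> /infinite_set_inj_nat [c cA cinj].
move=> /(sub_finite_set (@subDsetl _ B A)) /finite_set_leP [k].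
move=> /pcard_leP /injfunPex [idx idxk idxinj].
rewrite -(card_le_eql (inj_card_eq (hotel_inj cinj idxk idxinj))).
exact: subset_card_le (hotel_sub cA cinj).
Qed.

(* G encodes the graph {(g p, p)} of a bijection g from
   (fst @` G) `*` [set: bool] onto fst @` G, with fst @` G contained in X. *)
Definition doubling (T : Type) (X : set T) (G : set (T * (T * bool))) :=
  [/\ fst @` G `<=` X, {in G &, injective fst}, {in G &, injective snd},
      snd @` G `<=` fst @` G `*` [set: bool] &
      fst @` G `*` [set: bool] `<=` snd @` G].

Lemma doubling_card (T : Type) (X : set T) G : doubling X G ->
  (fst @` G `*` [set: bool] #= fst @` G)%card.
Proof.
move=> [_ Gfst Gsnd GsndS GSsnd].
have -> : fst @` G `*` [set: bool] = snd @` G by apply/seteqP; split.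
exact: card_eq_trans (inj_card_eq Gsnd) (card_esym (inj_card_eq Gfst)).
Qed.

Lemma exists_maximal_doubling (T : Type) (X : set T) :
  exists G, doubling X G /\ forall B, G `<` B -> ~ doubling X B.
Proof.
apply: Zorn_bigcup => F Fdbl Ftot.
have common a b : (\bigcup_(G in F) G) a -> (\bigcup_(G in F) G) b ->
    exists2 G, F G & G a /\ G b.
  move=> [G1 FG1 G1a] [G2 FG2 G2b].
  have [G12|G21] := Ftot _ _ FG1 FG2; [exists G2|exists G1] => //; split => //.
  - exact: G12.
  - exact: G21.
split.
- by move=> _ [a [G FG Ga] <-]; have [+ _ _ _ _] := Fdbl G FG; apply; exists a.
- move=> a b; rewrite !in_setE => /common /[apply] -[G FG [Ga Gb]].
  by have [_ + _ _ _] := Fdbl G FG; apply; rewrite in_setE.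
- move=> a b; rewrite !in_setE => /common /[apply] -[G FG [Ga Gb]].
  by have [_ _ + _ _] := Fdbl G FG; apply; rewrite in_setE.
- move=> _ [a [G FG Ga] <-]; have [_ _ _ + _] := Fdbl G FG.
  move=> /(_ a.2 (imageP _ Ga)) [[b Gb] Eb _]; split => //.
  by exists b => //; exists G.
- move=> [d e] [/= [a [G FG Ga] <-] _]; have [_ _ _ _ +] := Fdbl G FG.
  move=> /(_ (a.1, e)) [|b Gb Eb]; first by split => //; exists a.
  by exists b => //; exists G.
Qed.

Lemma maximal_doubling_cofinite (T : Type) (X : set T) G :
  doubling X G -> (forall B, G `<` B -> ~ doubling X B) ->
  finite_set (X `\` fst @` G).
Proof.
move=> [GX Gfst Gsnd GsndS GSsnd] Gmax.
(* Otherwise a sequence c in X `\` fst @` G could be doubled and added to G. *)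
apply: contrapT => XDinf; have [c cXD cinj] := infinite_set_inj_nat XDinf.
have cX n : X (c n) by have [] := cXD n.
have cG n : ~ (fst @` G) (c n) by have [] := cXD n.
pose E := [set (c n, (c n./2, odd n)) | n in [set: nat]].
have EG a : E a -> ~ (fst @` G) a.1 by move=> [n _ <-]; exact: cG.
apply: (Gmax (G `|` E)).
  split => [a Ga|/(_ (c 0%N, (c 0%N, false)))]; first by left.
  move=> /(_ (or_intror (ex_intro2 _ _ 0%N I erefl))) G0.
  by apply: (cG 0%N); exists (c 0%N, (c 0%N, false)).
split.
- by move=> _ [a [Ga|[n _ <-]] <-]; [apply: GX; exists a|exact: cX].
- move=> a b; rewrite !in_setE => -[Ga|Ea] [Gb|Eb] Eab.
  + by apply: Gfst; rewrite ?in_setE.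
  + by case: (EG b Eb); rewrite -Eab; exists a.
  + by case: (EG a Ea); rewrite Eab; exists b.
  + by case: Ea Eb Eab => [n _ <-] [m _ <-] /= /cinj ->.
- move=> a b; rewrite !in_setE => -[Ga|Ea] [Gb|Eb] Eab.
  + by apply: Gsnd; rewrite ?in_setE.
  + case: Eb Eab => n _ <- /= Eab; case: (cG n./2).
    by have [+ _] := GsndS _ (imageP snd Ga); rewrite Eab.
  + case: Ea Eab => n _ <- /= Eab; case: (cG n./2).
    by have [+ _] := GsndS _ (imageP snd Gb); rewrite -Eab.
  + case: Ea Eb Eab => [n _ <-] [m _ <-] /= [/cinj Enm Eodd].
    by rewrite -[n]odd_double_half -[m]odd_double_half Enm Eodd.
- move=> _ [a [Ga|[n _ <-]] <-].
    have [[d Gd] Ed _] := GsndS _ (imageP snd Ga).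
    by split => //; exists d => //; left.
  by split => //; exists (c n./2, (c n./2./2, odd n./2)) => //; right; exists n./2.
- move=> [e b] [/= [a [Ga|[n _ <-]] <-] _].
    have [d Gd Ed] := GSsnd (a.1, b) (conj (imageP fst Ga) I).
    by exists d => //; left.
  exists (c (b + n.*2)%N, (c n, b)) => //; right; exists (b + n.*2)%N => //.
  by rewrite half_bit_double oddD odd_double addbF; case: b.
Qed.

Lemma card_setXbool_le (T : Type) (X : set T) : infinite_set X ->
  (X `*` [set: bool] #<= X)%card.
Proof.
move=> Xinf; have [G [Gdbl Gmax]] := exists_maximal_doubling X.
have XDfin := maximal_doubling_cofinite Gdbl Gmax.
have /card_eqPle[DDle _] := doubling_card Gdbl.
have [DX _ _ _ _] := Gdbl; set D := fst @` G in DX XDfin DDle *.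
have Dinf : infinite_set D.
  by move=> Dfin; apply: Xinf; rewrite -(setDUK DX) finite_setU.
have DXinf : infinite_set (D `*` [set: bool]).
  move=> /(finite_image fst); suff -> : fst @` (D `*` [set: bool]) = D by [].
  by apply/seteqP; split => [_ [[d b] [Dd _] <-]|d Dd] //; exists (d, true).
have -> : X `*` [set: bool] = D `*` [set: bool] `|` (X `\` D) `*` [set: bool].
  apply/seteqP; split => [[x b] [/= Xx _]|[x b] [[/= /DX]|[/= []]]] //.
  by have [Dx|nDx] := pselect (D x); [left|right].
apply: card_le_trans (card_le_setU_finite DXinf (finite_setX XDfin finite_finset)) _.
exact: card_le_trans DDle (subset_card_le DX).
Qed.

Local Open Scope ring_scope.

Section IdempotentSplitting.
Variables (R : comNzRingType) (e : R).
Hypotheses (ee : e * e = e) (e_neq1 : e != 1).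

Definition annihilator : {pred R} := [pred r | e * r == 0].

Lemma annihilator_zmod_closed : zmod_closed annihilator.
Proof.
split=> [|a b]; rewrite !inE ?mulr0 // mulrBr => /eqP-> /eqP->.
by rewrite subr0.
Qed.
HB.instance Definition _ :=
  GRing.isZmodClosed.Build R annihilator annihilator_zmod_closed.

Record ann := Ann { ann_val : R; ann_valP : ann_val \in annihilator }.
HB.instance Definition _ := [isSub for ann_val].
HB.instance Definition _ := [Choice of ann by <:].
HB.instance Definition _ := [SubChoice_isSubZmodule of ann by <:].

Lemma annE (a : ann) : e * ann_val a = 0.
Proof. exact/eqP/ann_valP. Qed.

Lemma ann_mul_subproof (a b : ann) : ann_val a * ann_val b \in annihilator.
Proof. by rewrite inE mulrA annE mul0r. Qed.
Definition ann_mul a b := Ann (ann_mul_subproof a b).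

Lemma ann_one_subproof : 1 - e \in annihilator.
Proof. by rewrite inE mulrBr mulr1 ee subrr. Qed.
Definition ann_one := Ann ann_one_subproof.

Lemma ann_mulA : associative ann_mul.
Proof. by move=> a b c; apply: val_inj; rewrite /= mulrA. Qed.
Lemma ann_mulC : commutative ann_mul.
Proof. by move=> a b; apply: val_inj; rewrite /= mulrC. Qed.
Lemma ann_mul1 : left_id ann_one ann_mul.
Proof. by move=> a; apply: val_inj; rewrite /= mulrBl mul1r annE subr0. Qed.
Lemma ann_mulDl : left_distributive ann_mul +%R.
Proof. by move=> a b c; apply: val_inj; rewrite /= mulrDl. Qed.
Lemma ann_one_neq0 : ann_one != 0.
Proof.
apply/eqP => /(congr1 ann_val) /= /eqP; rewrite subr_eq0 => /eqP e1.
by move: e_neq1; rewrite -e1 eqxx.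
Qed.
HB.instance Definition _ := GRing.Zmodule_isComNzRing.Build ann
  ann_mulA ann_mulC ann_mul1 ann_mulDl ann_one_neq0.

(* The units and inverses are chosen classically; only integrality matters. *)
Definition ann_unit : {pred ann} := fun a => `[< exists b : ann, b * a = 1 >].
Definition ann_inv (a : ann) : ann :=
  if pselect (exists b : ann, b * a = 1) is left ex then projT1 (cid ex) else a.

Lemma ann_mulVr : {in ann_unit, left_inverse 1 ann_inv *%R}.
Proof.
move=> a /asboolP ex; rewrite /ann_inv; case: pselect => [ex'|//].
by case: cid.
Qed.
Lemma ann_unitPl (a b : ann) : b * a = 1 -> ann_unit a.
Proof. by move=> ba; apply/asboolP; exists b. Qed.
Lemma ann_inv_out : {in [predC ann_unit], ann_inv =1 id}.
Proof.
move=> a; rewrite inE /= => /asboolPn nex.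
by rewrite /ann_inv; case: pselect.
Qed.
HB.instance Definition _ := GRing.ComNzRing_hasMulInverse.Build ann
  ann_mulVr ann_unitPl ann_inv_out.

Hypothesis ann_integral : forall a b,
  e * a = 0 -> e * b = 0 -> a * b = 0 -> a = 0 \/ b = 0.

Lemma ann_integral_domain : GRing.integral_domain_axiom ann.
Proof.
move=> a b /(congr1 ann_val) /= ab.
by have [a0|b0] := ann_integral (annE a) (annE b) ab; apply/orP;
  [left|right]; apply/eqP/val_inj.
Qed.
HB.instance Definition _ := GRing.ComUnitRing_isIntegral.Build ann
  ann_integral_domain.

Hypotheses (e_neq0 : e != 0) (mule : forall r, e * r = 0 \/ e * r = e).

Lemma addee : e + e = 0.
Proof.
have := mule (1 + 1); rewrite mulrDr mulr1 => -[//|].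
rewrite -{3}[e]addr0 => /(addrI e) e0.
by move: e_neq0; rewrite e0 eqxx.
Qed.

Lemma ann_proj_subproof r : r * (1 - e) \in annihilator.
Proof. by rewrite inE mulrCA (eqP ann_one_subproof) mulr0. Qed.
Definition ann_proj r := Ann (ann_proj_subproof r).

Definition split_idem (r : R) : 'Z_2 * ann := ((e * r != 0)%:R, ann_proj r).

Lemma Z2_cases (b : 'Z_2) : b = 0 \/ b = 1.
Proof. by case: b => -[|[|//]] ?; [left|right]; apply: val_inj. Qed.

Lemma split_idem_bij : bijective split_idem.
Proof.
pose join (p : 'Z_2 * ann) := (if p.1 == 0 then 0 else e) + ann_val p.2.
exists join => [r|[b a]]; rewrite /join /split_idem /=.
  have [er|er] := mule r; rewrite er ?eqxx ?(negPf e_neq0) /= mulrBr mulr1 mulrC er.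
    by rewrite add0r subr0.
  by rewrite addrC subrK.
have ae : ann_val a * e = 0 by rewrite mulrC annE.
have [->|->] := Z2_cases b; rewrite /=.
  rewrite add0r annE eqxx; congr pair; apply: val_inj.
  by rewrite /= mulrBr mulr1 ae subr0.
rewrite mulrDr ee annE addr0 e_neq0; congr pair; apply: val_inj.
by rewrite /= mulrBr mulr1 mulrDl ee ae addr0 addrAC subrr add0r.
Qed.

Lemma split_idem_iso : ring_iso split_idem.
Proof.
split; first exact: split_idem_bij.
split=> [|r s|r s]; rewrite /split_idem.
- rewrite mulr1 e_neq0; congr pair; apply: val_inj; exact: mul1r.
- congr pair; last by apply: val_inj; rewrite /= mulrDl.
  rewrite /= mulrDr; have [->|->] := mule r; have [->|->] := mule s;
    rewrite ?addr0 ?add0r ?addee ?eqxx ?e_neq0 /= ?addr0 ?add0r //.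
  exact: val_inj.
- congr pair.
    have -> : e * (r * s) = (e * r) * (e * s) by rewrite mulrACA ee.
    by have [->|->] := mule r; have [->|->] := mule s;
      rewrite ?mulr0 ?mul0r ?ee ?eqxx ?e_neq0 /= ?mulr0 ?mul0r ?mulr1.
  apply: val_inj => /=.
  have ee' : (1 - e) * (1 - e) = 1 - e.
    by rewrite mulrBr mulr1 mulrBl mul1r ee subrr subr0.
  by rewrite mulrACA ee'.
Qed.

Lemma Z2_split_exists :
  exists (D : idomainType) (f : R -> ('Z_2 * D)%type), ring_iso f.
Proof. by exists ann, split_idem; exact: split_idem_iso. Qed.

End IdempotentSplitting.

Section ZeroDivisorGraph.
Variable R : comNzRingType.
Implicit Types (X Y : set R) (x y z u v w : R).

Lemma zdiv_starI x y : x != 0 -> y != 0 -> x * y = 0 -> zdiv_star R x.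
Proof. by move=> x0 y0 xy; split => //; exists y. Qed.

Lemma dominating_zdiv_star : dominating (zdiv_star R).
Proof. by split => // v Zv []. Qed.

Lemma total_dominating_zdiv_star : total_dominating (zdiv_star R).
Proof.
split => // v [v0 [y [y0 vy]]]; exists y; last by rewrite /zd_adj mulrC.
by apply: (zdiv_starI y0 v0); rewrite mulrC.
Qed.

Lemma total_dominating_dominating X : total_dominating X -> dominating X.
Proof. by move=> [XZ Xtot]; split => // v Zv _; exact: Xtot. Qed.

(* Isolated in the subgraph induced on X; taking y = x, an isolated x is not looped. *)
Definition isolated X x := X x /\ forall y, X y -> x * y != 0.

Lemma not_isolated X x : X x -> ~ isolated X x -> exists2 y, X y & x * y = 0.
Proof.
move=> Xx nisox; apply: contrapT => /forall2NP nadj; apply: nisox.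
by split => // y Xy; apply/eqP => xy; have [] := nadj y.
Qed.

Lemma no_isolated_total_dominating X :
  dominating X -> (forall x, ~ isolated X x) -> total_dominating X.
Proof.
move=> [XZ Xdom] noiso; split => // v Zv.
have [Xv|nXv] := pselect (X v); last exact: Xdom.
have [y Xy vy] := not_isolated Xv (noiso v).
by exists y; rewrite // /zd_adj mulrC.
Qed.

Definition improves X x X' :=
  [/\ dominating X', (X' #<= X)%card & isolated X' `<=` isolated X `\ x].

(* Trading x, x' in X for u, u': the hypotheses say that u, u' dominate
   everything x, x' dominated (x' possibly with help from a third vertex),
   and that no vertex adjacent to x' becomes isolated. *)
Section ReplacePair.
Variables (X : set R) (x x' u u' : R).
Hypotheses (Xdom : dominating X) (iso_x : isolated X x) (Xx' : X x') (x'x : x' != x).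
Hypotheses (Zu : zdiv_star R u) (Zu' : zdiv_star R u') (uu' : u * u' = 0).
Hypotheses (annx : forall v, x * v = 0 -> u * v = 0 \/ u' * v = 0)
  (annx' : forall v, x' * v = 0 -> u * v = 0 \/ u' * v = 0)
  (x_covered : u * x = 0 \/ u' * x = 0)
  (x'_covered : [\/ u * x' = 0, u' * x' = 0 |
                     exists2 y, X y & [/\ y != x, y != x' & y * x' = 0]])
  (annx'_sub : forall z, z * x' = 0 -> z * u = 0 \/ z * u' = 0).

Definition replace_pair z := if z == x then u else if z == x' then u' else z.

Let replace_pair_x : replace_pair x = u.
Proof. by rewrite /replace_pair eqxx. Qed.
Let replace_pair_x' : replace_pair x' = u'.
Proof. by rewrite /replace_pair eqxx (negPf x'x). Qed.
Let replace_pair_id y : y != x -> y != x' -> replace_pair y = y.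
Proof. by move=> yx yx'; rewrite /replace_pair (negPf yx) (negPf yx'). Qed.
Let mem_replace_pair y : X y -> y != x -> y != x' -> (replace_pair @` X) y.
Proof. by move=> Xy yx yx'; exists y; rewrite ?replace_pair_id. Qed.
Let mem_replace_pair_u : (replace_pair @` X) u.
Proof. by exists x; rewrite ?replace_pair_x //; case: iso_x. Qed.
Let mem_replace_pair_u' : (replace_pair @` X) u'.
Proof. by exists x'; rewrite ?replace_pair_x'. Qed.

Lemma dominating_replace_pair : dominating (replace_pair @` X).
Proof.
have [XZ Xadj] := Xdom.
have cover_by_uu' v : u * v = 0 \/ u' * v = 0 ->
    exists2 w, (replace_pair @` X) w & zd_adj w v.
  by case=> uv; [exists u|exists u'].
split.
  move=> _ [w Xw <-]; have [->|wx] := eqVneq w x; first by rewrite replace_pair_x.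
  have [->|wx'] := eqVneq w x'; first by rewrite replace_pair_x'.
  by rewrite replace_pair_id //; exact: XZ.
move=> v Zv nXv.
have [Xv|nXv0] := pselect (X v).
  have [->|vx] := eqVneq v x; first exact: cover_by_uu' x_covered.
  have [->|vx'] := eqVneq v x'; last by case: nXv; exact: mem_replace_pair.
  case: x'_covered => [ux'|u'x'|[y Xy [yx yx' yx'0]]].
  - exact: cover_by_uu' (or_introl ux').
  - exact: cover_by_uu' (or_intror u'x').
  - by exists y => //; exact: mem_replace_pair.
have [y Xy yv] := Xadj v Zv nXv0.
have [yx|yx] := eqVneq y x; first by apply: cover_by_uu' (annx _); rewrite -yx.
have [yx'|yx'] := eqVneq y x'; first by apply: cover_by_uu' (annx' _); rewrite -yx'.
by exists y => //; exact: mem_replace_pair.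
Qed.

Lemma isolated_replace_pair : isolated (replace_pair @` X) `<=` isolated X `\ x.
Proof.
move=> z [[w Xw <-] ziso].
have [wx|wx] := eqVneq w x.
  by have := ziso _ mem_replace_pair_u'; rewrite wx replace_pair_x uu' eqxx.
have [wx'|wx'] := eqVneq w x'.
  by have := ziso _ mem_replace_pair_u; rewrite wx' replace_pair_x' mulrC uu' eqxx.
rewrite replace_pair_id // in ziso *; split; last exact/eqP.
split => // y Xy.
have [->|yx] := eqVneq y x; first by rewrite mulrC; exact: iso_x.2.
have [->|yx'] := eqVneq y x'; last by apply: ziso; exact: mem_replace_pair.
by apply/eqP => /annx'_sub [/eqP|/eqP]; apply/negP; apply: ziso.
Qed.

Lemma replace_pair_improves : improves X x (replace_pair @` X).
Proof.
split; [exact: dominating_replace_pair|exact: card_image_le|].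
exact: isolated_replace_pair.
Qed.

End ReplacePair.

Lemma isolated_improvable X x x' : dominating X -> isolated X x -> X x' -> x' != x ->
  exists X', improves X x X'.
Proof.
move=> Xdom iso_x Xx' x'x; have [XZ _] := Xdom; have [Xx xiso] := iso_x.
have [x0 [y [y0 xy]]] := XZ x Xx; have [x'0 [y' [y'0 x'y']]] := XZ x' Xx'.
have xx'0 : x * x' != 0 := xiso _ Xx'.
have [[a [a0 ax ax'_iso]]|noa] :=
  pselect (exists a, [/\ a != 0, a * x = 0 & a * x' = 0 \/ ~ isolated X x']).
  exists (replace_pair x x' a (x * x') @` X); apply: replace_pair_improves => //.
  - exact: zdiv_starI a0 x0 ax.
  - by apply: (zdiv_starI xx'0 a0); rewrite mulrAC [x * a]mulrC ax mul0r.
  - by rewrite mulrA ax mul0r.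
  - by move=> v xv; right; rewrite mulrAC xv mul0r.
  - by move=> v x'v; right; rewrite -mulrA x'v mulr0.
  - by left.
  - case: ax'_iso => [ax'|/(not_isolated Xx') [y1 Xy1 x'y1]]; first by constructor 1.
    have [y1x|y1x] := eqVneq y1 x; first by move: xx'0; rewrite -y1x mulrC x'y1 eqxx.
    have [y1x'|y1x'] := eqVneq y1 x'.
      by constructor 2; rewrite -mulrA -{2}y1x' x'y1 mulr0.
    by constructor 3; exists y1 => //; split => //; rewrite mulrC.
  - by move=> z zx'; right; rewrite mulrCA zx' mulr0.
(* Now y, y' do not annihilate x', x respectively, so x y', x' y are nonzero. *)
have xy'0 : x * y' != 0.
  by apply/eqP => xy'; apply: noa; exists y'; split => //; [|left]; rewrite mulrC.
have x'y0 : x' * y != 0.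
  by apply/eqP => x'y; apply: noa; exists y; split => //; [|left]; rewrite mulrC.
have uu' : x * y' * (x' * y) = 0 by rewrite [x' * y]mulrC mulrACA xy mul0r.
exists (replace_pair x x' (x * y') (x' * y) @` X); apply: replace_pair_improves => //.
- exact: zdiv_starI xy'0 x'y0 uu'.
- by apply: (zdiv_starI x'y0 xy'0); rewrite mulrC.
- by move=> v xv; left; rewrite mulrAC xv mul0r.
- by move=> v x'v; right; rewrite mulrAC x'v mul0r.
- by right; rewrite -mulrA [y * x]mulrC xy mulr0.
- by constructor 1; rewrite -mulrA [y' * x']mulrC x'y' mulr0.
- by move=> z zx'; right; rewrite mulrA zx' mul0r.
Qed.

Lemma dominating_set1_mul x v : dominating [set x] -> zdiv_star R v -> v != x ->
  x * v = 0.
Proof.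
move=> [_ adj] Zv /eqP vx.
by have [_ ->] := adj v Zv vx.
Qed.

Lemma total_dominating_set1 x w : dominating [set x] -> w != 0 -> w * x = 0 ->
  (forall a, x * a = 0 -> w * a = 0) -> total_dominating [set w].
Proof.
move=> Xdom w0 wx wann; have [XZ _] := Xdom; have [x0 _] := XZ x erefl.
split=> [_ ->|v Zv]; first exact: zdiv_starI w0 x0 wx.
exists w => //; rewrite /zd_adj; have [->//|vx] := eqVneq v x.
exact/wann/(dominating_set1_mul Xdom).
Qed.

Lemma dominating_set1_split x : dominating [set x] -> x * x != 0 ->
  ~ (exists w, [/\ w != 0, w * x = 0 & forall a, x * a = 0 -> w * a = 0]) ->
  exists (D : idomainType) (f : R -> ('Z_2 * D)%type), ring_iso f.
Proof.
move=> Xdom xx0 nw; have [XZ _] := Xdom; have [x0 [y [y0 xy]]] := XZ x erefl.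
have mulx r : x * r = 0 \/ x * r = x.
  have [xr|xr0] := eqVneq (x * r) 0; [by left|right].
  apply/eqP; apply: contraT => xrx; case: nw; exists (x * r); split => //.
  - rewrite mulrC; apply: (dominating_set1_mul Xdom _ xrx).
    by apply: (zdiv_starI xr0 y0); rewrite mulrAC xy mul0r.
  - by move=> a xa; rewrite mulrAC xa mul0r.
have xx : x * x = x by case: (mulx x) => // xx; move: xx0; rewrite xx eqxx.
have x1 : x != 1 by apply/eqP => x1; move: y0; rewrite -[y]mul1r -x1 xy eqxx.
have integral a b : x * a = 0 -> x * b = 0 -> a * b = 0 -> a = 0 \/ b = 0.
  move=> xa xb ab; apply: contrapT => /not_orP [/eqP a0 /eqP b0].
  (* a + x would be a zero-divisor other than x that x does not annihilate. *)
  have xax : x * (a + x) = x by rewrite mulrDr xa xx add0r.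
  have ax0 : a + x != 0 by apply: contra_neq x0 => ax0; rewrite -xax ax0 mulr0.
  have axx : a + x != x by rewrite -subr_eq0 addrK.
  have := dominating_set1_mul Xdom (zdiv_starI ax0 b0 _) axx.
  by rewrite xax mulrDl ab xb addr0 => /(_ erefl) /eqP; apply/negP.
exact: Z2_split_exists xx x1 integral x0 mulx.
Qed.

Lemma total_dominating_le_finite X :
  ~ (exists (D : idomainType) (f : R -> ('Z_2 * D)%type), ring_iso f) ->
  dominating X -> finite_set (isolated X) ->
  exists2 Y : set R, total_dominating Y & (Y #<= X)%card.
Proof.
move=> notZ2D Xdom /finite_seqP [s sE].
have : isolated X `<=` [set` s] by rewrite sE.
elim: s X Xdom {sE} => [|x s IHs] X Xdom Xs.
  by exists X => //; apply: no_isolated_total_dominating => // x /Xs.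
have [iso_x|niso_x] := pselect (isolated X x); last first.
  apply: IHs Xdom _ => z zX; move: (Xs z zX); rewrite /= inE => /orP[/eqP zx|//].
  by case: niso_x; rewrite -zx.
have [[x' Xx' x'x]|nx'] := pselect (exists2 x', X x' & x' != x).
  have [X' [X'dom X'X X'iso]] := isolated_improvable Xdom iso_x Xx' x'x.
  have [|Y Ytot YX'] := IHs X' X'dom.
    move=> z /X'iso [/Xs /= + /eqP zx]; by rewrite inE (negPf zx).
  by exists Y => //; exact: card_le_trans YX' X'X.
have X1 : X = [set x].
  apply/seteqP; split => [z Xz|_ ->]; last by case: iso_x.
  by apply: contrapT => zx; apply: nx'; exists z => //; apply/eqP.
rewrite X1 in Xdom *.
have [[w [w0 wx wann]]|nw] :=
  pselect (exists w, [/\ w != 0, w * x = 0 & forall a, x * a = 0 -> w * a = 0]).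
  exists [set w]; first exact: total_dominating_set1 Xdom w0 wx wann.
  by have /card_eqPle[] := eq_card1 w x.
by case: notZ2D; apply: dominating_set1_split Xdom (iso_x.2 x iso_x.1) nw.
Qed.

Lemma total_dominating_le_infinite X : dominating X -> infinite_set X ->
  exists2 Y : set R, total_dominating Y & (Y #<= X)%card.
Proof.
move=> [XZ Xadj] Xinf.
have [mate mateP] : {mate : R -> R & forall x, X x -> mate x != 0 /\ x * mate x = 0}.
  apply: (@choice _ _ (fun x a => X x -> a != 0 /\ x * a = 0)) => x.
  have [Xx|nXx] := pselect (X x); last by exists 0.
  by have [_ [a aP]] := XZ x Xx; exists a.
pose pick (p : R * bool) := if p.2 then p.1 else mate p.1.
exists (pick @` (X `*` [set: bool])); last first.
  exact: card_le_trans (card_image_le _ _) (card_setXbool_le Xinf).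
split.
  move=> _ [[x []] [/= Xx _] <-]; rewrite /pick /=; first exact: XZ.
  have [a0 xa] := mateP x Xx; have [x0 _] := XZ x Xx.
  by apply: (zdiv_starI a0 x0); rewrite mulrC.
move=> v Zv; have [Xv|nXv] := pselect (X v).
  exists (mate v); first by exists (v, false).
  by rewrite /zd_adj mulrC; exact: (mateP v Xv).2.
by have [y Xy yv] := Xadj v Zv nXv; exists y => //; exists (y, true).
Qed.

Lemma total_dominating_le X :
  ~ (exists (D : idomainType) (f : R -> ('Z_2 * D)%type), ring_iso f) ->
  dominating X -> exists2 Y : set R, total_dominating Y & (Y #<= X)%card.
Proof.
move=> notZ2D Xdom; have [Xfin|Xinf] := pselect (finite_set X).
  by apply: total_dominating_le_finite notZ2D Xdom (sub_finite_set _ Xfin) => x [].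
exact: total_dominating_le_infinite.
Qed.

End ZeroDivisorGraph.

Theorem theorem1p1 (R : comNzRingType) :
  (exists x y : R, [/\ x != 0, y != 0 & x * y = 0]) ->
  ~ (exists (D : idomainType) (f : R -> ('Z_2 * D)%type), ring_iso f) ->
  gammat_eq_gamma R.
Proof.
move=> _ notZ2D.
have [X Xdom Xmin] := card_min_exists (@dominating_zdiv_star R).
have [Y Ytot Ymin] := card_min_exists (@total_dominating_zdiv_star R).
exists X, Y; split => //; apply: Cantor_Bernstein.
  exact: Xmin (total_dominating_dominating Ytot).
have [Y' Y'tot Y'X] := total_dominating_le notZ2D Xdom.
exact: card_le_trans (Ymin _ Y'tot) Y'X.
Qed.
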